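(* Fix the minority ratio $r$ of the Biased Preferential Attachment Model (BPAM) described in the context. For $x\in(0,1]$ define $$F^{(t)}(x)=\frac{MF^{(t)}(R,x,r)}{MF^{(t)}(B,x,r)}=\frac{q_{RB}(x)}{q_{BB}(x)},$$ where $x$ is the homophily parameter, and $q_{RB}(x), q_{BB}(x)$ are as defined in the context with $\rho=x$ and with $\alpha=\alpha(x)$ the asymptotic red edge fraction for that homophily parameter. Then for every integer $t\geq 1$, $F^{(t)}$ is an increasing function on $(0,1]$ and $F^{(t)}(1)=1$.
   Context: The BPAM with two communities (red $R$, blue $B$) grows a directed network one node at a time. A new node is labeled $R$ with probability $r$ and $B$ with probability $1-r$, where $0< r\le 1/2$. The new node picks a target with probability proportional to current degree. If the two labels differ, the edge is accepted with probability $\rho\in[0,1]$ (the homophily parameter); otherwise the choice is repeated until an edge forms. This is repeated $d$ times, so every node has outdegree $d$. Let $\alpha=\alpha(\rho)$ be the limit as $N\to\infty$ of the expected fraction of total degree belonging to red nodes. It is characterized as the equilibrium (fixed point) satisfying $$\alpha=\tfrac12\Big(r+\tfrac{r\alpha}{\alpha+\rho-\alpha\rho}+\tfrac{\alpha\rho(1-r)}{\alpha\rho+1-\alpha}\Big),$$ and it satisfies $\alpha<r$. Define $$p^{out}_{RB}=\frac{\rho(1-\alpha)}{\alpha+\rho(1-\alpha)},\qquad p^{out}_{BB}=\frac{1-\alpha}{\rho\alpha+1-\alpha}.$$ Let $D_B=\frac{r\rho}{\alpha+\rho(1-\alpha)}+\frac{1-r}{\alpha\rho+1-\alpha}$ and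 $D_R=\frac{r}{\alpha+\rho(1-\alpha)}+\frac{\rho(1-r)}{\alpha\rho+1-\alpha}$. Define $$p^{in}_{BB}=\frac{(1-r)/(\alpha\rho+1-\alpha)}{D_B},\qquad p^{in}_{BR}=\frac{\rho r/(\alpha+\rho(1-\alpha))}{D_B},$$ $$p^{in}_{RR}=\frac{r/(\alpha+\rho(1-\alpha))}{D_R},\qquad p^{in}_{RB}=\frac{\rho(1-r)/(\alpha\rho+1-\alpha)}{D_R}.$$ Set $$q_{BB}=p^{in}_{BB}p^{out}_{BB}+p^{in}_{BR}p^{out}_{RB},\qquad q_{RB}=p^{in}_{RB}p^{out}_{BB}+p^{in}_{RR}p^{out}_{RB}.$$ In the paper's mean-field analysis of HITS, the multiplicative factors are $MF^{(t)}(R)=q_{RB}\tilde d^{in}_t(B)$ and $MF^{(t)}(B)=q_{BB}\tilde d^{in}_t(B)$. Here $\tilde d^{in}_t(B)=\sum_{u\in B}(d^{in}(u))^t/\sum_{u\in B}d^{in}(u)$ is the size-biased $t$-th indegree moment of the blue nodes, so their ratio is $q_{RB}/q_{BB}$. *)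

From Stdlib Require Import Reals.
Open Scope R_scope.

(* Fixed-point equation characterizing the asymptotic red degree fraction alpha(rho). *)
Definition alpha_eq (r rho a : R) : Prop :=
  a = / 2 * (r + r * a / (a + rho - a * rho) + a * rho * (1 - r) / (a * rho + 1 - a)).

Definition p_out_RB (rho a : R) : R := rho * (1 - a) / (a + rho * (1 - a)).
Definition p_out_BB (rho a : R) : R := (1 - a) / (rho * a + 1 - a).

Definition D_B (r rho a : R) : R := r * rho / (a + rho * (1 - a)) + (1 - r) / (a * rho + 1 - a).
Definition D_R (r rho a : R) : R := r / (a + rho * (1 - a)) + rho * (1 - r) / (a * rho + 1 - a).

Definition p_in_BB (r rho a : R) : R := ((1 - r) / (a * rho + 1 - a)) / D_B r rho a.
Definition p_in_BR (r rho a : R) : R := (rho * r / (a + rho * (1 - a))) / D_B r rho a.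
Definition p_in_RR (r rho a : R) : R := (r / (a + rho * (1 - a))) / D_R r rho a.
Definition p_in_RB (r rho a : R) : R := (rho * (1 - r) / (a * rho + 1 - a)) / D_R r rho a.

Definition q_BB (r rho a : R) : R :=
  p_in_BB r rho a * p_out_BB rho a + p_in_BR r rho a * p_out_RB rho a.
Definition q_RB (r rho a : R) : R :=
  p_in_RB r rho a * p_out_BB rho a + p_in_RR r rho a * p_out_RB rho a.

(* F^(t)(x) = MF^(t)(R,x,r) / MF^(t)(B,x,r) = q_RB(x) / q_BB(x); the common factor
   tilde d^in_t(B) cancels, so the value does not depend on t. *)
Definition F (t : nat) (r : R) (alpha : R -> R) (x : R) : R :=
  q_RB r x (alpha x) / q_BB r x (alpha x).

(* Put k = B/A with A = alpha + x(1 - alpha) and B = alpha x + 1 - alpha. Then F(x) is an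
   explicit rational function [ratio r x k], and the fixed-point equation for alpha becomes
   [fp_poly r x k = 0], quadratic in x and affine in r. For r = 1/2 this forces k = 1, where
   [ratio] is 2x / (1 + x^2). For r < 1/2 it forces 1 < k < (1 - r)/r and x = [fp_root r k],
   the positive root in x. Implicit differentiation shows that [fp_root r] and
   [ratio_on_curve r] are strictly decreasing in k: once r is eliminated through the relation, the sign of each derivative
   is that of a polynomial in (x, k) which has constant sign on 1 < k, kx < 1. Hence k
   decreases and F increases with x; at x = 1, k = 1 and F = 1. *)

From Stdlib Require Import Reals Lra.
From Coquelicot Require Import Coquelicot.
Open Scope R_scope.

Ltac positivity :=
  repeat first [ lra | apply pow_lt | apply Rmult_lt_0_compat | apply Rplus_lt_0_compat ].

Definition kappa (x a : R) : R := (a * x + 1 - a) / (a + x * (1 - a)).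

(* With A = a + x(1-a), B = ax + 1 - a and k = B/A = [kappa x a], these are B^2 times the
   brackets of q_RB and q_BB, and B times D_B and D_R. *)
Definition g_RB (r k : R) : R := (1 - r) + r * k ^ 2.
Definition g_BB (r x k : R) : R := (1 - r) + x ^ 2 * r * k ^ 2.
Definition g_DB (r x k : R) : R := (1 - r) + x * r * k.
Definition g_DR (r x k : R) : R := r * k + x * (1 - r).

Definition ratio (r x k : R) : R := x * g_RB r k * g_DB r x k / (g_BB r x k * g_DR r x k).

Lemma g_pos r x k : 0 < r < 1 -> 0 < x -> 0 < k ->
  0 < g_RB r k /\ 0 < g_BB r x k /\ 0 < g_DB r x k /\ 0 < g_DR r x k.
Proof. intros. unfold g_RB, g_BB, g_DB, g_DR. repeat split; positivity. Qed.

Lemma ratio_pos r x k : 0 < r < 1 -> 0 < x -> 0 < k -> 0 < ratio r x k.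
Proof.
  intros Hr Hx Hk. destruct (g_pos r x k Hr Hx Hk) as (? & ? & ? & ?).
  unfold ratio. apply Rdiv_lt_0_compat; positivity.
Qed.

Lemma q_ratio_kappa r x a : 0 < r < 1 -> 0 < x -> 0 < a < 1 ->
  q_RB r x a / q_BB r x a = ratio r x (kappa x a).
Proof.
  intros Hr Hx Ha.
  assert (HA : 0 < a + x * (1 - a)) by nra.
  assert (HB : 0 < x * a + 1 - a) by nra.
  unfold q_RB, q_BB, p_in_BB, p_in_BR, p_in_RR, p_in_RB, p_out_BB, p_out_RB, D_B, D_R,
    ratio, kappa, g_RB, g_BB, g_DB, g_DR.
  field.
  repeat split; apply Rgt_not_eq; positivity.
Qed.

Lemma kappa_one a : kappa 1 a = 1.
Proof. unfold kappa. replace (a + 1 * (1 - a)) with 1 by ring. field. Qed.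

Lemma ratio_one r k : 0 < r < 1 -> 0 < k -> ratio r 1 k = 1.
Proof.
  intros Hr Hk. destruct (g_pos r 1 k Hr Rlt_0_1 Hk) as (? & ? & ? & ?).
  unfold ratio, g_RB, g_BB, g_DB, g_DR in *. field. split; lra.
Qed.

Lemma ratio_lt_one r x k : 0 < r < 1 -> 0 < x < 1 -> 0 < k -> k * x < 1 -> ratio r x k < 1.
Proof.
  intros Hr Hx Hk Hkx. destruct (g_pos r x k Hr (proj1 Hx) Hk) as (? & ? & ? & ?).
  assert (E : 1 - ratio r x k
              = r * (1 - r) * k * (1 - x ^ 2) * (1 - k * x) / (g_BB r x k * g_DR r x k)).
  { unfold ratio, g_RB, g_BB, g_DB, g_DR in *. field. split; lra. }
  assert (0 < r * (1 - r) * k * (1 - x ^ 2) * (1 - k * x) / (g_BB r x k * g_DR r x k)).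
  { assert (0 < 1 - x ^ 2) by nra. apply Rdiv_lt_0_compat; positivity. }
  lra.
Qed.

Lemma ratio_half x : 0 < x -> ratio (/ 2) x 1 = 2 * x / (1 + x ^ 2).
Proof. intros Hx. unfold ratio, g_RB, g_BB, g_DB, g_DR. field. repeat split; nra. Qed.

Lemma kappa_bounds x a : 0 < x < 1 -> 0 < a < 1 -> x < kappa x a /\ kappa x a * x < 1.
Proof.
  intros Hx Ha.
  assert (HA : 0 < a + x * (1 - a)) by nra.
  assert (E1 : kappa x a - x = (1 - a) * (1 - x ^ 2) / (a + x * (1 - a))).
  { unfold kappa. field. lra. }
  assert (E2 : 1 - kappa x a * x = a * (1 - x ^ 2) / (a + x * (1 - a))).
  { unfold kappa. field. lra. }
  assert (0 < 1 - x ^ 2) by nra.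
  assert (0 < (1 - a) * (1 - x ^ 2) / (a + x * (1 - a))) by (apply Rdiv_lt_0_compat; positivity).
  assert (0 < a * (1 - x ^ 2) / (a + x * (1 - a))) by (apply Rdiv_lt_0_compat; positivity).
  lra.
Qed.

Definition fp_coef (r k : R) : R :=
  r * k ^ 3 + r * k ^ 2 - 2 * k ^ 2 + 2 * k - (1 - r) * k - (1 - r).
Definition fp_poly (r x k : R) : R :=
  k * (1 - k) * x ^ 2 + fp_coef r k * x + 2 * k * ((1 - r) - r * k).
Definition fp_num (x k : R) : R := (1 - k * x) * (2 * k + (k - 1) * x).
Definition fp_den (x k : R) : R := (k + 1) * (2 * k - x * (k ^ 2 + 1)).

Lemma fp_poly_affine r x k : fp_poly r x k = fp_num x k - r * fp_den x k.
Proof. unfold fp_poly, fp_coef, fp_num, fp_den. ring. Qed.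

Lemma fp_poly_at_one r x : fp_poly r x 1 = 2 * (1 - 2 * r) * (1 - x).
Proof. unfold fp_poly, fp_coef. ring. Qed.

Lemma fp_poly_kappa r x a : 0 < x -> 0 < a < 1 -> alpha_eq r x a ->
  fp_poly r x (kappa x a) = 0.
Proof.
  intros Hx Ha He. unfold alpha_eq in He.
  set (A := a + x * (1 - a)). set (B := a * x + 1 - a).
  assert (HA : 0 < A) by (unfold A; nra).
  assert (HB : 0 < B) by (unfold B; nra).
  assert (Hcleared : 2 * a * A * B - r * A * B - r * a * B - a * x * (1 - r) * A = 0).
  { rewrite He at 1. unfold A, B. field. split; nra. }
  apply (Rmult_eq_reg_r (A ^ 3)); [|apply pow_nonzero; lra].
  rewrite Rmult_0_l, <- (Rmult_0_r ((1 - x) * (1 + x) ^ 2)), <- Hcleared.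
  unfold fp_poly, fp_coef, kappa, A, B. field. nra.
Qed.

Lemma fp_num_pos x k : 0 < x < k -> k * x < 1 -> 0 < fp_num x k.
Proof. intros. unfold fp_num. apply Rmult_lt_0_compat; nra. Qed.

Lemma fp_den_pos r x k : 0 < r -> 0 < x < k -> k * x < 1 -> fp_poly r x k = 0 ->
  0 < fp_den x k.
Proof.
  intros Hr Hxk Hkx HP. rewrite fp_poly_affine in HP.
  assert (0 < fp_num x k) by (apply fp_num_pos; lra).
  nra.
Qed.

Lemma two_num_sub_den x k :
  2 * fp_num x k - fp_den x k = (1 - k) * (2 * k * (1 + x ^ 2) - x * (k - 1) ^ 2).
Proof. unfold fp_num, fp_den. ring. Qed.

Lemma two_num_sub_den_factor_pos x k : 0 < x < k -> k * x < 1 ->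
  0 < 2 * k * (1 + x ^ 2) - x * (k - 1) ^ 2.
Proof.
  intros Hxk Hkx.
  assert (x * (k - 1) ^ 2 < 2 * k); [|nra].
  destruct (Rle_or_lt k 1); nra.
Qed.

Lemma curve_k_ge_one r x k : 0 < r <= / 2 -> 0 < x < k -> k * x < 1 -> fp_poly r x k = 0 ->
  1 <= k.
Proof.
  intros Hr Hxk Hkx HP.
  assert (HD := fp_den_pos r x k ltac:(lra) Hxk Hkx HP).
  assert (HS := two_num_sub_den_factor_pos x k Hxk Hkx).
  assert (E := two_num_sub_den x k). rewrite fp_poly_affine in HP.
  assert ((1 - k) * (2 * k * (1 + x ^ 2) - x * (k - 1) ^ 2) = (2 * r - 1) * fp_den x k) by lra.
  nra.
Qed.

Lemma curve_k_half x k : 0 < x < k -> k * x < 1 -> fp_poly (/ 2) x k = 0 -> k = 1.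
Proof.
  intros Hxk Hkx HP.
  assert (HS := two_num_sub_den_factor_pos x k Hxk Hkx).
  assert (E := two_num_sub_den x k). rewrite fp_poly_affine in HP.
  assert (Hprod : (1 - k) * (2 * k * (1 + x ^ 2) - x * (k - 1) ^ 2) = 0) by lra.
  apply Rmult_integral in Hprod as [H | H]; lra.
Qed.

Lemma curve_k_bound r x k : 0 < r -> 0 < x < k -> k * x < 1 -> 1 < k -> fp_poly r x k = 0 ->
  r * k < 1 - r.
Proof.
  intros Hr Hxk Hkx Hk HP.
  assert (HD := fp_den_pos r x k Hr Hxk Hkx HP). rewrite fp_poly_affine in HP.
  assert (E : ((1 - r) - r * k) * fp_den x k = (k + 1) * x * k * (k - 1) * (1 + x)).
  { transitivity (fp_den x k - (1 + k) * fp_num x k); [|unfold fp_num, fp_den; ring].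
    replace (fp_num x k) with (r * fp_den x k) by lra. ring. }
  assert (0 < (k + 1) * x * k * (k - 1) * (1 + x)) by positivity.
  nra.
Qed.

Definition fp_disc (r k : R) : R := fp_coef r k ^ 2 - 8 * k ^ 2 * (1 - k) * ((1 - r) - r * k).
(* The positive root of [fp_poly r . k], in the rationalised form 2C / (-b + sqrt disc)
   of the quadratic formula. *)
Definition fp_root (r k : R) : R :=
  4 * k * ((1 - r) - r * k) / (- fp_coef r k + sqrt (fp_disc r k)).

Section FixedPointRoot.

Variables r k : R.
Hypotheses (hr : 0 < r) (hk : 1 < k) (hkr : r * k < 1 - r).

Lemma fp_disc_gt : fp_coef r k ^ 2 < fp_disc r k.
Proof.
  unfold fp_disc.
  assert (0 < 8 * k ^ 2 * (k - 1) * ((1 - r) - r * k)) by positivity.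
  nra.
Qed.

Lemma fp_root_den_pos : 0 < - fp_coef r k + sqrt (fp_disc r k).
Proof.
  assert (HD := fp_disc_gt).
  assert (Hs := sqrt_pos (fp_disc r k)).
  assert (Hs2 : sqrt (fp_disc r k) * sqrt (fp_disc r k) = fp_disc r k).
  { apply sqrt_sqrt. nra. }
  nra.
Qed.

Lemma fp_root_pos : 0 < fp_root r k.
Proof. unfold fp_root. apply Rdiv_lt_0_compat; [positivity | exact fp_root_den_pos]. Qed.

Lemma fp_root_root : fp_poly r (fp_root r k) k = 0.
Proof.
  assert (Hden := fp_root_den_pos).
  assert (Hs2 : sqrt (fp_disc r k) * sqrt (fp_disc r k) = fp_disc r k).
  { apply sqrt_sqrt. assert (HD := fp_disc_gt). nra. }
  unfold fp_root in *. set (s := sqrt (fp_disc r k)) in *.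
  apply (Rmult_eq_reg_r ((- fp_coef r k + s) ^ 2)); [|apply pow_nonzero; lra].
  rewrite Rmult_0_l.
  transitivity (2 * k * ((1 - r) - r * k) * (s * s - fp_disc r k)).
  - unfold fp_poly, fp_disc. field. lra.
  - rewrite Hs2. ring.
Qed.

(* For a quadratic P(v) = A v^2 + B v + C with root u: u P(v) = (u - v)(C - A u v);
   here A < 0 < C, so P(v) has the sign of u - v for v > 0. *)
Lemma fp_root_mul_fp_poly v :
  fp_root r k * fp_poly r v k
  = (fp_root r k - v) * (2 * k * ((1 - r) - r * k) + k * (k - 1) * fp_root r k * v).
Proof.
  transitivity (fp_root r k * fp_poly r v k - v * fp_poly r (fp_root r k) k).
  - rewrite fp_root_root. ring.
  - unfold fp_poly. ring.
Qed.

Lemma fp_root_unique v : 0 < v -> fp_poly r v k = 0 -> v = fp_root r k.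
Proof.
  intros Hv HP.
  assert (E := fp_root_mul_fp_poly v). rewrite HP, Rmult_0_r in E.
  assert (Hroot := fp_root_pos).
  assert (0 < 2 * k * ((1 - r) - r * k) + k * (k - 1) * fp_root r k * v) by positivity.
  symmetry in E. apply Rmult_integral in E as [E | E]; lra.
Qed.

Lemma fp_root_mul_lt_one : fp_root r k * k < 1.
Proof.
  assert (Hinv : k * fp_poly r (/ k) k = r * (1 + k) ^ 2 * (1 - k)).
  { unfold fp_poly, fp_coef. field. lra. }
  assert (Hneg : fp_poly r (/ k) k < 0).
  { assert (0 < r * (1 + k) ^ 2 * (k - 1)) by positivity. nra. }
  assert (E := fp_root_mul_fp_poly (/ k)).
  assert (Hroot := fp_root_pos).
  assert (0 < / k) by (apply Rinv_0_lt_compat; lra).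
  assert (0 < 2 * k * ((1 - r) - r * k) + k * (k - 1) * fp_root r k * / k) by positivity.
  assert (Hlt : fp_root r k < / k) by nra.
  apply (Rmult_lt_compat_r k) in Hlt; [|lra].
  rewrite Rinv_l in Hlt; lra.
Qed.

End FixedPointRoot.

Definition fp_poly_dx (r x k : R) : R := 2 * k * (1 - k) * x + fp_coef r k.
Definition fp_poly_dk (r x k : R) : R :=
  (1 - 2 * k) * x ^ 2 + (3 * r * k ^ 2 + 2 * r * k - 4 * k + 2 - (1 - r)) * x
  + 2 * (1 - r) - 4 * r * k.

Definition ratio_dx_num (r x k : R) : R :=
  g_DB r x k * g_BB r x k + x * g_DR r x k * g_BB r x k
  - 2 * x ^ 2 * k * g_DR r x k * g_DB r x k.
Definition ratio_dk_num (r x k : R) : R :=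
  2 * k * g_DB r x k * g_DR r x k - g_RB r k * g_BB r x k.
Definition ratio_dx (r x k : R) : R :=
  ratio r x k * (r * k * ratio_dx_num r x k / (x * g_DR r x k * g_DB r x k * g_BB r x k)).
Definition ratio_dk (r x k : R) : R :=
  ratio r x k * (r * (1 - r) * (1 - x ^ 2) * ratio_dk_num r x k
                 / (g_RB r k * g_BB r x k * g_DB r x k * g_DR r x k)).

Definition ratio_slope_num (r x k : R) : R :=
  r * (1 - r) * (1 - x ^ 2) * ratio_dk_num r x k * x * fp_poly_dx r x k
  - r * k * ratio_dx_num r x k * g_RB r k * fp_poly_dk r x k.

Definition slope_factor (x k : R) : R :=
  (64*k^5 - 256*x*k^4 + 288*x*k^5 - 160*x*k^6 + 400*x^2*k^3 - 848*x^2*k^4 + 1088*x^2*k^5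
  - 720*x^2*k^6 + 144*x^2*k^7 - 304*x^3*k^2 + 1008*x^3*k^3 - 1984*x^3*k^4 + 2264*x^3*k^5
  - 1688*x^3*k^6 + 760*x^3*k^7 - 56*x^3*k^8 + 112*x^4*k - 616*x^4*k^2 + 1612*x^4*k^3
  - 2636*x^4*k^4 + 3104*x^4*k^5 - 2624*x^4*k^6 + 1404*x^4*k^7 - 428*x^4*k^8 + 8*x^4*k^9
  - 16*x^5 + 192*x^5*k - 668*x^5*k^2 + 1512*x^5*k^3 - 2316*x^5*k^4 + 2808*x^5*k^5
  - 2508*x^5*k^6 + 1696*x^5*k^7 - 700*x^5*k^8 + 128*x^5*k^9 - 24*x^6 + 140*x^6*k
  - 450*x^6*k^2 + 886*x^6*k^3 - 1354*x^6*k^4 + 1558*x^6*k^5 - 1574*x^6*k^6 + 1218*x^6*k^7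
  - 646*x^6*k^8 + 198*x^6*k^9 - 16*x^6*k^10 - 12*x^7 + 64*x^7*k - 200*x^7*k^2
  + 360*x^7*k^3 - 440*x^7*k^4 + 512*x^7*k^5 - 568*x^7*k^6 + 528*x^7*k^7 - 356*x^7*k^8
  + 136*x^7*k^9 - 24*x^7*k^10 - 2*x^8 + 26*x^8*k - 72*x^8*k^2 + 96*x^8*k^3 - 68*x^8*k^4
  + 40*x^8*k^5 - 84*x^8*k^6 + 136*x^8*k^7 - 114*x^8*k^8 + 54*x^8*k^9 - 12*x^8*k^10
  + 6*x^9*k - 22*x^9*k^2 + 24*x^9*k^3 + 4*x^9*k^4 - 28*x^9*k^5 + 16*x^9*k^6 + 16*x^9*k^7
  - 28*x^9*k^8 + 14*x^9*k^9 - 2*x^9*k^10 - 2*x^10*k^2 + 6*x^10*k^3 - 2*x^10*k^4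
  - 10*x^10*k^5 + 10*x^10*k^6 + 2*x^10*k^7 - 6*x^10*k^8 + 2*x^10*k^9).
Definition slope_factor_shifted (t w : R) : R :=
  (256*w^3 + 1408*w^4 + 3328*w^5 + 4416*w^6 + 3584*w^7 + 1792*w^8 + 512*w^9 + 64*w^10
  + 768*t*w^2 + 6912*t*w^3 + 23744*t*w^4 + 43520*t*w^5 + 48032*t*w^6 + 33184*t*w^7
  + 14048*t*w^8 + 3296*t*w^9 + 320*t*w^10 + 768*t^2*w + 11904*t^2*w^2 + 61952*t^2*w^3
  + 159616*t^2*w^4 + 238624*t^2*w^5 + 221424*t^2*w^6 + 128992*t^2*w^7 + 45296*t^2*w^8
  + 8544*t^2*w^9 + 640*t^2*w^10 + 256*t^3 + 8704*t^3*w + 75264*t^3*w^2 + 285248*t^3*w^3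
  + 587872*t^3*w^4 + 729184*t^3*w^5 + 566280*t^3*w^6 + 273448*t^3*w^7 + 77728*t^3*w^8
  + 11456*t^3*w^9 + 640*t^3*w^10 + 2304*t^4 + 43008*t^4*w + 265792*t^4*w^2
  + 792368*t^4*w^3 + 1337608*t^4*w^4 + 1376520*t^4*w^5 + 882208*t^4*w^6 + 344616*t^4*w^7
  + 76592*t^4*w^8 + 8384*t^4*w^9 + 320*t^4*w^10 + 9280*t^5 + 123104*t^5*w + 591632*t^5*w^2
  + 1428960*t^5*w^3 + 1984292*t^5*w^4 + 1675824*t^5*w^5 + 866196*t^5*w^6 + 263904*t^5*w^7
  + 43280*t^5*w^8 + 3168*t^5*w^9 + 64*t^5*w^10 + 22144*t^6 + 227536*t^6*w + 878728*t^6*w^2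
  + 1732544*t^6*w^3 + 1963152*t^6*w^4 + 1332284*t^6*w^5 + 535620*t^6*w^6 + 119824*t^6*w^7
  + 12960*t^6*w^8 + 480*t^6*w^9 + 34768*t^7 + 285776*t^7*w + 894808*t^7*w^2
  + 1431352*t^7*w^3 + 1298222*t^7*w^4 + 683640*t^7*w^5 + 201268*t^7*w^6 + 29496*t^7*w^7
  + 1584*t^7*w^8 + 37648*t^8 + 249496*t^8*w + 629856*t^8*w^2 + 802772*t^8*w^3
  + 563532*t^8*w^4 + 217020*t^8*w^5 + 41756*t^8*w^6 + 3016*t^8*w^7 + 28636*t^9
  + 151990*t^9*w + 303870*t^9*w^2 + 298624*t^9*w^3 + 153102*t^9*w^4 + 38528*t^9*w^5
  + 3648*t^9*w^6 + 15280*t^10 + 63722*t^10*w + 97624*t^10*w^2 + 69864*t^10*w^3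
  + 23412*t^10*w^4 + 2904*t^10*w^5 + 5602*t^11 + 17728*t^11*w + 19648*t^11*w^2
  + 9176*t^11*w^3 + 1520*t^11*w^4 + 1344*t^12 + 3036*t^12*w + 2180*t^12*w^2 + 504*t^12*w^3
  + 190*t^13 + 272*t^13*w + 96*t^13*w^2 + 12*t^14 + 8*t^14*w).
Definition fp_dk_factor (x k : R) : R :=
  (- 4*k^2 + 4*x*k - 4*x*k^2 + 4*x*k^3 - 2*x^2 + 2*x^2*k - 4*x^2*k^2 + 2*x^2*k^3
  - 2*x^2*k^4 - x^3 + 2*x^3*k + 2*x^3*k^2 + 2*x^3*k^3 - x^3*k^4).
Definition fp_dk_factor_shifted (t w : R) : R :=
  (8*w + 8*w^2 + 4*w^3 + 8*t + 32*t*w + 28*t*w^2 + 8*t*w^3 + 28*t^2 + 50*t^2*w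
  + 28*t^2*w^2 + 4*t^2*w^3 + 30*t^3 + 30*t^3*w + 8*t^3*w^2 + 13*t^4 + 6*t^4*w + 2*t^5).

(* The substitution k = 1 + t, x = 1 / (1 + t + w) maps t, w > 0 onto the region
   1 < k, 0 < x < 1/k; after it both factors have coefficients of a single sign. *)
Lemma region_shift x k : 0 < x -> 1 < k -> k * x < 1 ->
  exists t w, 0 < t /\ 0 < w /\ k = 1 + t /\ x = 1 / (1 + t + w).
Proof.
  intros Hx Hk Hkx. exists (k - 1), (1 / x - k).
  assert (k < 1 / x).
  { apply (Rmult_lt_reg_r x); [lra|]. unfold Rdiv. rewrite Rmult_assoc, Rinv_l; lra. }
  repeat split; try lra. field. lra.
Qed.

Lemma slope_factor_shift t w : 1 + t + w <> 0 ->
  slope_factor (1 / (1 + t + w)) (1 + t) * (1 + t + w) ^ 10 = slope_factor_shifted t w.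
Proof. intros. unfold slope_factor, slope_factor_shifted. field. assumption. Qed.

Lemma fp_dk_factor_shift t w : 1 + t + w <> 0 ->
  fp_dk_factor (1 / (1 + t + w)) (1 + t) * (1 + t + w) ^ 3 = - fp_dk_factor_shifted t w.
Proof. intros. unfold fp_dk_factor, fp_dk_factor_shifted. field. assumption. Qed.

Lemma slope_factor_pos x k : 0 < x -> 1 < k -> k * x < 1 -> 0 < slope_factor x k.
Proof.
  intros Hx Hk Hkx.
  destruct (region_shift x k Hx Hk Hkx) as (t & w & Ht & Hw & -> & ->).
  assert (E := slope_factor_shift t w ltac:(lra)).
  assert (0 < slope_factor_shifted t w) by (unfold slope_factor_shifted; positivity).
  assert (0 < (1 + t + w) ^ 10) by positivity.
  nra.
Qed.

Lemma fp_dk_factor_neg x k : 0 < x -> 1 < k -> k * x < 1 -> fp_dk_factor x k < 0.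
Proof.
  intros Hx Hk Hkx.
  destruct (region_shift x k Hx Hk Hkx) as (t & w & Ht & Hw & -> & ->).
  assert (E := fp_dk_factor_shift t w ltac:(lra)).
  assert (0 < fp_dk_factor_shifted t w) by (unfold fp_dk_factor_shifted; positivity).
  assert (0 < (1 + t + w) ^ 3) by positivity.
  nra.
Qed.

Section EliminateR.

Variables x k : R.
Hypotheses (hk1 : k + 1 <> 0) (hk2 : 2 * k - x * (k ^ 2 + 1) <> 0).

Lemma fp_poly_dx_eliminate :
  fp_poly_dx (fp_num x k / fp_den x k) x k * fp_den x k
  = (k - 1) * (k + 1) * k * (x ^ 2 * (k ^ 2 + 1) - 2 * k - 4 * x * k).
Proof. unfold fp_poly_dx, fp_coef, fp_num, fp_den. field. auto. Qed.

Lemma fp_poly_dk_eliminate :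
  fp_poly_dk (fp_num x k / fp_den x k) x k * fp_den x k = fp_dk_factor x k.
Proof. unfold fp_poly_dk, fp_dk_factor, fp_num, fp_den. field. auto. Qed.

Lemma ratio_slope_num_eliminate :
  ratio_slope_num (fp_num x k / fp_den x k) x k * fp_den x k ^ 5
  = k ^ 4 * (k + 1) * (1 - x * k) ^ 2 * (k - x) * (1 + x) ^ 2 * slope_factor x k.
Proof.
  unfold ratio_slope_num, ratio_dk_num, ratio_dx_num, g_RB, g_BB, g_DB, g_DR,
    fp_poly_dx, fp_poly_dk, fp_coef, slope_factor, fp_num, fp_den.
  field. auto.
Qed.

End EliminateR.

Section CurveSigns.

Variables r x k : R.
Hypotheses (hr : 0 < r) (hx : 0 < x) (hk : 1 < k) (hkx : k * x < 1)
  (hP : fp_poly r x k = 0).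

Lemma curve_den_factor_pos : 0 < 2 * k - x * (k ^ 2 + 1).
Proof.
  assert (HD := fp_den_pos r x k hr ltac:(nra) hkx hP).
  unfold fp_den in HD. nra.
Qed.

Lemma curve_r_eq : r = fp_num x k / fp_den x k.
Proof.
  assert (HD := fp_den_pos r x k hr ltac:(nra) hkx hP).
  rewrite fp_poly_affine in hP. field_simplify_eq; lra.
Qed.

Lemma fp_poly_dx_neg : fp_poly_dx r x k < 0.
Proof.
  assert (HD := curve_den_factor_pos).
  assert (E := fp_poly_dx_eliminate x k ltac:(lra) ltac:(lra)).
  rewrite <- curve_r_eq in E. unfold fp_den in E.
  assert (0 < (k - 1) * (k + 1) * k) by positivity.
  assert (x ^ 2 * (k ^ 2 + 1) - 2 * k - 4 * x * k < 0) by nra.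
  assert (0 < (k + 1) * (2 * k - x * (k ^ 2 + 1))) by positivity.
  nra.
Qed.

Lemma fp_poly_dk_neg : fp_poly_dk r x k < 0.
Proof.
  assert (HD := curve_den_factor_pos).
  assert (E := fp_poly_dk_eliminate x k ltac:(lra) ltac:(lra)).
  rewrite <- curve_r_eq in E. unfold fp_den in E.
  assert (fp_dk_factor x k < 0) by (apply fp_dk_factor_neg; lra).
  assert (0 < (k + 1) * (2 * k - x * (k ^ 2 + 1))) by positivity.
  nra.
Qed.

Lemma ratio_slope_num_pos : 0 < ratio_slope_num r x k.
Proof.
  assert (x < 1) by nra.
  assert (HD := fp_den_pos r x k hr ltac:(nra) hkx hP).
  assert (HD2 := curve_den_factor_pos).
  assert (E := ratio_slope_num_eliminate x k ltac:(lra) ltac:(lra)).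
  rewrite <- curve_r_eq in E.
  assert (0 < slope_factor x k) by (apply slope_factor_pos; lra).
  assert (0 < k ^ 4 * (k + 1) * (1 - x * k) ^ 2 * (k - x) * (1 + x) ^ 2 * slope_factor x k)
    by positivity.
  assert (0 < fp_den x k ^ 5) by positivity.
  nra.
Qed.

End CurveSigns.

Definition ratio_on_curve (r k : R) : R := ratio r (fp_root r k) k.

Section CurveDerivative.

Variable r : R.
Hypothesis hr : 0 < r < 1.

Lemma range_locally k : 1 < k -> r * k < 1 - r ->
  locally k (fun t => 1 < t /\ r * t < 1 - r).
Proof.
  intros Hk Hkr. apply (locally_interval _ _ 1 ((1 - r) / r)); simpl.
  - exact Hk.
  - apply Rlt_div_r; lra.
  - intros t Ht1 Ht2. apply Rlt_div_r in Ht2; lra.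
Qed.

Lemma decreasing_on_range (f df : R -> R) :
  (forall k, 1 < k -> r * k < 1 - r -> is_derive f k (df k)) ->
  (forall k, 1 < k -> r * k < 1 - r -> df k < 0) ->
  forall a b, 1 < a -> a < b -> r * b < 1 - r -> f b < f a.
Proof.
  intros Hf Hdf a b Ha Hab Hb.
  enough (- f a < - f b) by lra.
  apply (incr_function (fun k => - f k) 1 ((1 - r) / r) (fun k => - df k)); simpl.
  - intros k Hk1 Hk2. apply Rlt_div_r in Hk2; [|lra].
    apply (is_derive_opp f). apply Hf; lra.
  - intros k Hk1 Hk2. apply Rlt_div_r in Hk2; [|lra].
    assert (df k < 0) by (apply Hdf; lra). lra.
  - exact Ha.
  - exact Hab.
  - apply Rlt_div_r; lra.
Qed.

Lemma fp_root_ex_derive k : 1 < k -> r * k < 1 - r -> ex_derive (fp_root r) k.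
Proof.
  intros Hk Hkr.
  assert (HD : 0 < fp_disc r k).
  { assert (fp_coef r k ^ 2 < fp_disc r k) by (apply fp_disc_gt; lra). nra. }
  assert (Hden : 0 < - fp_coef r k + sqrt (fp_disc r k)) by (apply fp_root_den_pos; lra).
  unfold fp_root, fp_disc, fp_coef in *. auto_derive. repeat split.
  - eapply Rlt_le_trans; [exact HD|]. right. ring.
  - apply Rgt_not_eq. eapply Rlt_le_trans; [exact Hden|]. right.
    apply f_equal2; [ring | apply f_equal; ring].
Qed.

Lemma fp_root_implicit_derive k : 1 < k -> r * k < 1 - r ->
  fp_poly_dx r (fp_root r k) k * Derive (fp_root r) k + fp_poly_dk r (fp_root r k) k = 0.
Proof.
  intros Hk Hkr.
  assert (Hzero : is_derive (fun t => fp_poly r (fp_root r t) t) k 0).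
  { apply (is_derive_ext_loc (fun _ => 0)); [|apply (is_derive_const 0)].
    apply (filter_imp (fun t => 1 < t /\ r * t < 1 - r)); [|exact (range_locally k Hk Hkr)].
    intros t [Ht Htr]. symmetry. apply fp_root_root; lra. }
  assert (Hchain : is_derive (fun t => fp_poly r (fp_root r t) t) k
      (fp_poly_dx r (fp_root r k) k * Derive (fp_root r) k + fp_poly_dk r (fp_root r k) k)).
  { unfold fp_poly, fp_poly_dx, fp_poly_dk, fp_coef. auto_derive.
    - repeat split; apply fp_root_ex_derive; assumption.
    - change (Derive (fun t => fp_root r t) k) with (Derive (fp_root r) k). ring. }
  rewrite <- (is_derive_unique _ _ _ Hchain). exact (is_derive_unique _ _ _ Hzero).
Qed.

Lemma ratio_on_curve_derive k : 1 < k -> r * k < 1 - r ->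
  is_derive (ratio_on_curve r) k
    (ratio_dx r (fp_root r k) k * Derive (fp_root r) k + ratio_dk r (fp_root r k) k).
Proof.
  intros Hk Hkr.
  assert (Hroot : 0 < fp_root r k) by (apply fp_root_pos; lra).
  destruct (g_pos r (fp_root r k) k hr Hroot ltac:(lra)) as (? & ? & ? & ?).
  assert (Hex := fp_root_ex_derive k Hk Hkr).
  unfold ratio_on_curve, ratio_dx, ratio_dk, ratio_dx_num, ratio_dk_num, ratio,
    g_RB, g_BB, g_DB, g_DR in *.
  auto_derive.
  - repeat split; auto. apply Rgt_not_eq. positivity.
  - change (Derive (fun t => fp_root r t) k) with (Derive (fp_root r) k).
    field. repeat split; lra.
Qed.

Lemma ratio_implicit_slope x k d : 0 < x -> 0 < k -> fp_poly_dx r x k <> 0 ->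
  fp_poly_dx r x k * d + fp_poly_dk r x k = 0 ->
  ratio_dx r x k * d + ratio_dk r x k
  = ratio r x k * ratio_slope_num r x k
    / (x * g_RB r k * g_DB r x k * g_BB r x k * g_DR r x k * fp_poly_dx r x k).
Proof.
  intros Hx Hk Hdx Hd.
  destruct (g_pos r x k hr Hx Hk) as (? & ? & ? & ?).
  replace d with (- fp_poly_dk r x k / fp_poly_dx r x k) by (field_simplify_eq; lra).
  unfold ratio_dx, ratio_dk, ratio_slope_num. field. repeat split; lra.
Qed.

Section OnRange.

Variable k : R.
Hypotheses (hk : 1 < k) (hkr : r * k < 1 - r).

Let x := fp_root r k.

Lemma fp_root_derive_neg : Derive (fp_root r) k < 0.
Proof.
  assert (Hx : 0 < x) by (apply fp_root_pos; lra).
  assert (Hkx : x * k < 1) by (apply fp_root_mul_lt_one; lra).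
  assert (HP : fp_poly r x k = 0) by (apply fp_root_root; lra).
  assert (Hdx := fp_poly_dx_neg r x k ltac:(lra) Hx hk ltac:(lra) HP).
  assert (Hdk := fp_poly_dk_neg r x k ltac:(lra) Hx hk ltac:(lra) HP).
  assert (Hd := fp_root_implicit_derive k hk hkr). fold x in Hd.
  nra.
Qed.

Lemma ratio_on_curve_derive_neg :
  ratio_dx r x k * Derive (fp_root r) k + ratio_dk r x k < 0.
Proof.
  assert (Hx : 0 < x) by (apply fp_root_pos; lra).
  assert (Hkx : x * k < 1) by (apply fp_root_mul_lt_one; lra).
  assert (HP : fp_poly r x k = 0) by (apply fp_root_root; lra).
  assert (Hdx := fp_poly_dx_neg r x k ltac:(lra) Hx hk ltac:(lra) HP).
  assert (HJ := ratio_slope_num_pos r x k ltac:(lra) Hx hk ltac:(lra) HP).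
  assert (HG := ratio_pos r x k hr Hx ltac:(lra)).
  destruct (g_pos r x k hr Hx ltac:(lra)) as (? & ? & ? & ?).
  rewrite (ratio_implicit_slope x k (Derive (fp_root r) k)); try lra.
  - apply Rdiv_pos_neg; [positivity |].
    apply Rmult_pos_neg; [positivity | exact Hdx].
  - apply fp_root_implicit_derive; assumption.
Qed.

End OnRange.

Lemma fp_root_decreasing a b : 1 < a -> a < b -> r * b < 1 - r -> fp_root r b < fp_root r a.
Proof.
  apply (decreasing_on_range (fp_root r) (Derive (fp_root r))).
  - intros k Hk Hkr. apply Derive_correct, fp_root_ex_derive; assumption.
  - exact fp_root_derive_neg.
Qed.

Lemma ratio_on_curve_decreasing a b : 1 < a -> a < b -> r * b < 1 - r ->
  ratio_on_curve r b < ratio_on_curve r a.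
Proof.
  apply (decreasing_on_range (ratio_on_curve r)
           (fun k => ratio_dx r (fp_root r k) k * Derive (fp_root r) k
                     + ratio_dk r (fp_root r k) k)).
  - exact ratio_on_curve_derive.
  - exact ratio_on_curve_derive_neg.
Qed.

End CurveDerivative.

Lemma kappa_on_curve r x a : 0 < r < / 2 -> 0 < x < 1 -> 0 < a < 1 -> alpha_eq r x a ->
  1 < kappa x a /\ r * kappa x a < 1 - r /\ x = fp_root r (kappa x a).
Proof.
  intros Hr Hx Ha He.
  destruct (kappa_bounds x a Hx Ha) as [Hxk Hkx].
  assert (HP := fp_poly_kappa r x a (proj1 Hx) Ha He).
  set (k := kappa x a) in *.
  assert (Hk : 1 < k).
  { destruct (curve_k_ge_one r x k ltac:(lra) ltac:(lra) Hkx HP) as [h | h]; [exact h |].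
    rewrite <- h, fp_poly_at_one in HP. nra. }
  assert (Hkr := curve_k_bound r x k ltac:(lra) ltac:(lra) Hkx Hk HP).
  repeat split; try assumption.
  apply fp_root_unique; lra.
Qed.

Lemma kappa_half x a : 0 < x < 1 -> 0 < a < 1 -> alpha_eq (/ 2) x a -> kappa x a = 1.
Proof.
  intros Hx Ha He.
  destruct (kappa_bounds x a Hx Ha) as [Hxk Hkx].
  apply curve_k_half with x; [lra | exact Hkx | exact (fp_poly_kappa _ x a (proj1 Hx) Ha He)].
Qed.

Lemma ratio_kappa_increasing r x y ax ay : 0 < r <= / 2 -> 0 < x -> x < y -> y < 1 ->
  0 < ax < 1 -> 0 < ay < 1 -> alpha_eq r x ax -> alpha_eq r y ay ->
  ratio r x (kappa x ax) < ratio r y (kappa y ay).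
Proof.
  intros Hr Hx Hxy Hy1 Hax Hay Hex Hey.
  destruct (Rlt_or_le r (/ 2)) as [Hr2 | Hr2].
  - destruct (kappa_on_curve r x ax ltac:(lra) ltac:(lra) Hax Hex) as (Hkx & Hkxr & Ex).
    destruct (kappa_on_curve r y ay ltac:(lra) ltac:(lra) Hay Hey) as (Hky & Hkyr & Ey).
    assert (Hk : kappa y ay < kappa x ax).
    { destruct (Rtotal_order (kappa y ay) (kappa x ax)) as [h | [h | h]]; [exact h | |].
      - rewrite h, <- Ex in Ey. lra.
      - assert (fp_root r (kappa y ay) < fp_root r (kappa x ax))
          by (apply fp_root_decreasing; lra).
        lra. }
    assert (Hdecr := ratio_on_curve_decreasing r ltac:(lra) (kappa y ay) (kappa x ax) Hky Hk Hkxr).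
    unfold ratio_on_curve in Hdecr. rewrite <- Ex, <- Ey in Hdecr. exact Hdecr.
  - assert (Hrh : r = / 2) by lra. subst r.
    rewrite (kappa_half x ax ltac:(lra) Hax Hex), (kappa_half y ay ltac:(lra) Hay Hey).
    rewrite !ratio_half by lra.
    assert (E : 2 * y / (1 + y ^ 2) - 2 * x / (1 + x ^ 2)
                = 2 * (y - x) * (1 - x * y) / ((1 + x ^ 2) * (1 + y ^ 2))).
    { field. split; nra. }
    assert (0 < 2 * (y - x) * (1 - x * y) / ((1 + x ^ 2) * (1 + y ^ 2))).
    { apply Rdiv_lt_0_compat; [| positivity]. assert (0 < 1 - x * y) by nra. positivity. }
    lra.
Qed.

Theorem proposition2 (r : R) (alpha : R -> R)
  (hr0 : 0 < r) (hr1 : r <= / 2)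
  (halpha_range : forall x, 0 < x <= 1 -> 0 < alpha x < 1)
  (halpha_eq : forall x, 0 < x <= 1 -> alpha_eq r x (alpha x)) :
  forall t : nat, (1 <= t)%nat ->
    (forall x y, 0 < x <= 1 -> 0 < y <= 1 -> x < y -> F t r alpha x < F t r alpha y)
    /\ F t r alpha 1 = 1.
Proof.
  intros t _.
  assert (HF : forall x, 0 < x <= 1 -> F t r alpha x = ratio r x (kappa x (alpha x))).
  { intros x Hx. apply q_ratio_kappa; [lra | lra | auto]. }
  assert (HF1 : F t r alpha 1 = 1).
  { rewrite HF, kappa_one by lra. apply ratio_one; lra. }
  split; [| exact HF1].
  intros x y Hx Hy Hxy.
  destruct (Req_dec y 1) as [-> | Hy1].
  - rewrite HF1, HF by lra.
    destruct (kappa_bounds x (alpha x) ltac:(lra) (halpha_range x Hx)) as [Hxk Hkx].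
    apply ratio_lt_one; lra.
  - rewrite !HF by lra.
    apply ratio_kappa_increasing; auto; lra.
Qed.
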